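(* Let $G$ be a Tutte-Berge graph such that the induced subgraph of $G$ on $D(G)$ has no isolated vertices. Then $D(G)=\emptyset$ and $G$ has a perfect matching.
   Context: $\nu(G)$ is the matching number of $G$. For $U\subseteq V(G)$, $N_G(U)$ is the set of vertices adjacent to at least one vertex of $U$. $G$ is a Tutte-Berge graph if there exists an independent set $T$ of $G$ with $|T| = |N_G(T)| + |V(G)| - 2\nu(G)$. $D(G)$ is the set of vertices of $G$ left uncovered by at least one maximum matching of $G$. *)

(* A finite simple graph is a symmetric irreflexive relation
   e : rel T on a finite type T of vertices; V(G) = [set: T]. *)
From mathcomp Require Import all_boot all_order.
Set Implicit Arguments. Unset Strict Implicit. Unset Printing Implicit Defensive.

Section Graphs.
Variable T : finType.
Variable e : rel T.

Definition simple_graph : Prop := symmetric e /\ irreflexive e.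

Definition is_edge (E : {set T}) : bool :=
  [exists x, exists y, e x y && (E == [set x; y])].

Definition matching (M : {set {set T}}) : bool :=
  [forall E in M, is_edge E] && trivIset M.

Definition nu : nat := \max_(M : {set {set T}} | matching M) #|M|.

Definition max_matching (M : {set {set T}}) : bool :=
  matching M && (#|M| == nu).

Definition covered (M : {set {set T}}) : {set T} := cover M.

Definition perfect_matching (M : {set {set T}}) : bool :=
  matching M && (covered M == [set: T]).

Definition Dset : {set T} :=
  [set x | [exists M : {set {set T}}, max_matching M && (x \notin covered M)]].

Definition nbhd (U : {set T}) : {set T} := [set y | [exists x in U, e x y]].

Definition independent (U : {set T}) : bool :=
  [forall x in U, forall y in U, ~~ e x y].

(* Tutte-Berge graph: an independent T with |T| = |N(T)| + |V| - 2 nu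
   (stated without truncated subtraction) *)
Definition tutte_berge_graph : Prop :=
  exists U : {set T}, independent U /\
    (#|U| + 2 * nu = #|nbhd U| + #|T|)%N.

Definition D_no_isolated : Prop :=
  forall x, x \in Dset -> exists2 y, y \in Dset & e x y.

End Graphs.

(* Fix an independent set U with |U| + 2 nu = |N(U)| + |V|.  In a maximum
   matching M every covered vertex u of U is matched to a distinct vertex of
   N(U), so at most |N(U)| vertices of U are covered and at least
   |U| - |N(U)| = |V| - 2 nu = |V \ cover M| are not.  Hence every vertex left
   uncovered by a maximum matching lies in U, i.e. D(G) is a subset of the
   independent set U.  If no vertex of D(G) is isolated in G[D(G)], then D(G)
   must be empty, so every maximum matching is perfect. *)
From mathcomp Require Import all_boot all_order.
From mathcomp Require Import zify.

Set Implicit Arguments. Unset Strict Implicit. Unset Printing Implicit Defensive.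

Section Matchings.
Variable T : finType.
Variable e : rel T.
Hypothesis e_sym : symmetric e.
Hypothesis e_irr : irreflexive e.

Lemma edge_of_matching (M : {set {set T}}) E :
  matching e M -> E \in M -> exists x y, e x y /\ E = [set x; y].
Proof.
case/andP=> /forall_inP edgeM _ /edgeM /existsP [x /existsP [y /andP [exy /eqP ->]]].
by exists x, y.
Qed.

Lemma card_cover_matching (M : {set {set T}}) :
  matching e M -> #|cover M| = 2 * #|M|.
Proof.
move=> mM; have /andP [_ /eqP <-] := mM.
rewrite (eq_bigr (fun _ => 2)) ?sum_nat_const 1?mulnC // => E /(edge_of_matching mM).
case=> x [y [exy ->]]; rewrite cards2; case: eqP => // xy.
by move: exy; rewrite xy e_irr.
Qed.

(* For u not covered by M this is the junk value u. *)
Definition mate (M : {set {set T}}) (u : T) : T :=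
  odflt u [pick v | [set u; v] \in M].

Lemma mate_in_matching (M : {set {set T}}) u :
  matching e M -> u \in cover M -> [set u; mate M u] \in M.
Proof.
move=> mM /bigcupP [E EM uE]; rewrite /mate; case: pickP => [v // | no_mate].
have [x [y [_ Exy]]] := edge_of_matching mM EM.
move: uE EM; rewrite Exy in_set2 => /orP [] /eqP ? xyM; subst u.
- by have := no_mate y; rewrite xyM.
- by have := no_mate x; rewrite setUC xyM.
Qed.

Lemma adj_mate (M : {set {set T}}) u :
  matching e M -> u \in cover M -> e u (mate M u).
Proof.
move=> mM /(mate_in_matching mM) /(edge_of_matching mM) [x [y [exy Exy]]].
have u_neq_mate : u != mate M u.
  have := cards2 u (mate M u); rewrite Exy cards2.
  case: eqP => [xy | _]; last by case: (u != mate M u).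
  by move: exy; rewrite xy e_irr.
have : u \in [set x; y] by rewrite -Exy set21.
have : mate M u \in [set x; y] by rewrite -Exy set22.
rewrite !in_set2 => /orP [] /eqP mx /orP [] /eqP ux;
  by move: u_neq_mate; rewrite mx ux ?eqxx // e_sym.
Qed.

Lemma mate_inj (M : {set {set T}}) :
  matching e M -> {in cover M &, injective (mate M)}.
Proof.
move=> mM u u' uC u'C same_mate.
have uM := mate_in_matching mM uC; have u'M := mate_in_matching mM u'C.
have same_edge : [set u; mate M u] = [set u'; mate M u'].
  apply/eqP; apply: contraT => neq.
  have /andP [_ /trivIsetP disjM] := mM.
  by have := disjointFr (disjM _ _ uM u'M neq) (set22 u (mate M u));
     rewrite same_mate set22.
have : u \in [set u'; mate M u'] by rewrite -same_edge set21.
rewrite in_set2 -same_mate => /orP [/eqP // | /eqP umate].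
by have := adj_mate mM uC; rewrite -umate e_irr.
Qed.

Lemma card_covered_le_nbhd (U : {set T}) (M : {set {set T}}) :
  matching e M -> #|U :&: cover M| <= #|nbhd e U|.
Proof.
move=> mM; have mate_injUC : {in U :&: cover M &, injective (mate M)}.
  by move=> u u' /setIP [_ uC] /setIP [_ u'C]; apply: mate_inj.
rewrite -(card_in_imset mate_injUC); apply: subset_leq_card.
apply/subsetP=> _ /imsetP [u /setIP [uU uC] ->]; rewrite inE.
by apply/exists_inP; exists u => //; apply: adj_mate.
Qed.

Lemma uncovered_sub_tutte_berge_set (U : {set T}) (M : {set {set T}}) :
  (#|U| + 2 * nu e = #|nbhd e U| + #|T|)%N -> max_matching e M ->
  ~: cover M \subset U.
Proof.
move=> tbU /andP [mM /eqP cardM].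
have splitU := cardsID (cover M) U.
have splitT := cardsC (cover M).
have coverM := card_cover_matching mM.
have coveredU := card_covered_le_nbhd U mM.
have : U :\: cover M == ~: cover M.
  rewrite eqEcard; apply/andP; split; last lia.
  by apply/subsetP=> y; rewrite !inE => /andP [].
by move/eqP <-; apply: subsetDl.
Qed.

Lemma Dset_sub_tutte_berge_set (U : {set T}) :
  (#|U| + 2 * nu e = #|nbhd e U| + #|T|)%N -> Dset e \subset U.
Proof.
move=> tbU; apply/subsetP=> x; rewrite inE => /existsP [M /andP [maxM xC]].
by apply: (subsetP (uncovered_sub_tutte_berge_set tbU maxM)); rewrite inE.
Qed.

Lemma matching_set0 : matching e set0.
Proof.
rewrite /matching /trivIset big_set0 /cover big_set0 cards0 eqxx andbT.
by apply/forall_inP => E; rewrite inE.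
Qed.

Lemma exists_max_matching : exists M : {set {set T}}, max_matching e M.
Proof.
have : 0 < #|[pred M : {set {set T}} | matching e M]|.
  by apply/card_gt0P; exists set0; rewrite inE matching_set0.
case/(eq_bigmax_cond (fun M : {set {set T}} => #|M|)) => M mM cardM.
rewrite inE in mM; exists M; rewrite /max_matching mM /= -cardM.
by apply/eqP/eq_bigl => M'; rewrite inE.
Qed.

Lemma max_matching_perfect (M : {set {set T}}) :
  Dset e = set0 -> max_matching e M -> perfect_matching e M.
Proof.
move=> D0 maxM; have /andP [mM _] := maxM.
rewrite /perfect_matching mM eqEsubset subsetT /=.
apply/subsetP=> x _; apply: contraT => xC.
have : x \in Dset e by rewrite inE; apply/existsP; exists M; rewrite maxM.
by rewrite D0 inE.
Qed.

End Matchings.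

Theorem lemma2p9 (T : finType) (e : rel T) :
  simple_graph e -> tutte_berge_graph e -> D_no_isolated e ->
  Dset e = set0 /\ exists M : {set {set T}}, perfect_matching e M.
Proof.
move=> [e_sym e_irr] [U [indU tbU]] D_adj.
have DU := Dset_sub_tutte_berge_set e_sym e_irr tbU.
have D0 : Dset e = set0.
  apply/eqP; rewrite -subset0; apply/subsetP=> x xD.
  have [y yD exy] := D_adj x xD.
  by move/forall_inP: indU => /(_ x (subsetP DU x xD)) /forall_inP
     /(_ y (subsetP DU y yD)); rewrite exy.
have [M maxM] := exists_max_matching e.
by split=> //; exists M; apply: max_matching_perfect.
Qed.
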